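(* Let $G$ be a torsion-free abelian group, totally ordered compatibly with addition, in which every subset that is bounded below is well-ordered. Then for any strictly increasing sequence $(g_i)_{i\in\mathbb{N}_0}$ in $G$, there exists a sequence $(n_i)_{i\in\mathbb{N}_0}$ of positive integers such that $(g_{n_{i+1}}-g_{n_i})_{i\in\mathbb{N}_0}$ is strictly increasing.
   Context: A total order $\le$ on an abelian group $G$ is compatible with addition if $b\le c$ iff $b+d\le c+d$ for all $b,c,d\in G$. A subset is bounded below if it has a lower bound in $G$, and well-ordered if each nonempty subset has a least element. *)

From mathcomp Require Import all_boot all_algebra.
Set Implicit Arguments. Unset Strict Implicit. Unset Printing Implicit Defensive.
Import GRing.Theory.
Local Open Scope ring_scope.

Definition total_order (G : Type) (le : G -> G -> Prop) : Prop :=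
  (forall x, le x x) /\
  (forall x y, le x y -> le y x -> x = y) /\
  (forall x y z, le x y -> le y z -> le x z) /\
  (forall x y, le x y \/ le y x).

Definition add_compatible (G : zmodType) (le : G -> G -> Prop) : Prop :=
  forall b c d : G, le b c <-> le (b + d) (c + d).

Definition torsion_free (G : zmodType) : Prop :=
  forall (n : nat) (x : G), x *+ n.+1 = 0 -> x = 0.

Definition bounded_below (G : Type) (le : G -> G -> Prop) (S : G -> Prop) : Prop :=
  exists l, forall x, S x -> le l x.

Definition well_ordered (G : Type) (le : G -> G -> Prop) (S : G -> Prop) : Prop :=
  forall T : G -> Prop, (forall x, T x -> S x) -> (exists x, T x) ->
    exists m, T m /\ forall y, T y -> le m y.

Definition lt_of (G : Type) (le : G -> G -> Prop) (x y : G) : Prop :=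
  le x y /\ x <> y.

Definition strictly_increasing (G : Type) (le : G -> G -> Prop) (u : nat -> G) : Prop :=
  forall i : nat, lt_of le (u i) (u i.+1).

From mathcomp Require Import all_boot all_algebra.
From Stdlib Require Import Classical ClassicalEpsilon.
Local Open Scope ring_scope.
Import GRing.Theory.
Set Implicit Arguments. Unset Strict Implicit.

(* A strictly increasing sequence g is unbounded above: were all g_k <= M, the
   set {M - g_k} would be bounded below by 0, hence have a least element
   M - g_j, and then g_(j+1) <= g_j.  So n_(i+2) can be chosen greedily with
   g_(n_(i+2)) > g_(n_(i+1)) + (g_(n_(i+1)) - g_(n_i)). *)

Section OrderedGroup.
Variables (G : zmodType) (le : G -> G -> Prop).
Hypotheses (Htot : total_order le) (Hcomp : add_compatible le).
Hypothesis Hwo : forall S : G -> Prop, bounded_below le S -> well_ordered le S.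

Lemma lt_of_addr (a b d : G) : lt_of le a b -> lt_of le (a + d) (b + d).
Proof.
move=> [le_ab ne_ab]; split; first exact/(Hcomp a b d).
by move=> /addIr.
Qed.

Lemma subr_ge0_of_le (a b : G) : le a b -> le 0 (b - a).
Proof. by move=> /(Hcomp _ _ (- a)); rewrite subrr. Qed.

Lemma le_sub2l (a b c : G) : le a b -> le (c - b) (c - a).
Proof.
move=> /(Hcomp _ _ (c - a - b)).
by rewrite addrA [a + _]addrC subrK [b + _]addrC subrK.
Qed.

Lemma increasing_unbounded (g : nat -> G) :
  strictly_increasing le g -> forall M, exists k, lt_of le M (g k).
Proof.
move=> g_incr M; have [le_refl [le_anti [_ le_total]]] := Htot.
apply: NNPP => no_k.
have g_le_M k : le (g k) M.
  case: (le_total (g k) M) => // M_le_gk.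
  case: (classic (M = g k)) => [->|M_ne_gk]; first exact: le_refl.
  by case: no_k; exists k.
pose S x := exists k, x = M - g k.
have S_bounded : bounded_below le S.
  by exists 0 => _ [k ->]; apply/subr_ge0_of_le/g_le_M.
have [_ [[j ->] S_min]] :=
  Hwo S_bounded (fun _ Sx => Sx) (ex_intro S _ (ex_intro _ 0%N erefl)).
have := le_sub2l M (S_min _ (ex_intro _ j.+1 erefl)).
rewrite !subKr => gSj_le_gj.
by case: (g_incr j) => gj_le_gSj; apply; apply: le_anti.
Qed.

Lemma increasing_differences_of_selector (g : nat -> G) (f : G -> nat) :
  (forall M, 0 < f M)%N -> (forall M, lt_of le M (g (f M))) ->
  exists n : nat -> nat, (forall i, 0 < n i)%N /\
    strictly_increasing le (fun i => g (n i.+1) - g (n i)).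
Proof.
move=> f_gt0 lt_g_f.
pose step (q : nat * nat) := (q.2, f (g q.2 + (g q.2 - g q.1))).
pose p i := iter i step (1, 2)%N.
exists (fun i => (p i).1); split.
  by case=> [|[|i]] //; rewrite /p !iterS /= f_gt0.
move=> i; rewrite /p !iterS /=.
set a := g _.1; set b := g _.2.
have := lt_of_addr (- b) (lt_g_f (b + (b - a))).
by rewrite [b + _]addrC addrK.
Qed.

End OrderedGroup.

Theorem lemma4p4 (G : zmodType) (le : G -> G -> Prop)
  (Htot : total_order le) (Hcomp : add_compatible le)
  (Htf : torsion_free G)
  (Hwo : forall S : G -> Prop, bounded_below le S -> well_ordered le S)
  (g : nat -> G) (Hg : strictly_increasing le g) :
  exists n : nat -> nat, (forall i, (0 < n i)%N) /\
    strictly_increasing le (fun i => g (n i.+1) - g (n i)).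
Proof.
have gS_incr : strictly_increasing le (fun k => g k.+1) by move=> k; apply: Hg.
have [f lt_gS_f] := ClassicalEpsilon.choice (fun M k => lt_of le M (g k.+1))
  (increasing_unbounded Htot Hcomp Hwo gS_incr).
exact: (increasing_differences_of_selector Hcomp (f := fun M => (f M).+1)).
Qed.
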